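(* For all $1\le i<j\le\ell$, $X_iX_j=q^{-1}X_jX_i$.
   Context: $0<q<1$, $\ell\ge1$. In $U_q(\mathfrak{su}(\ell+1))$ (generators $K_i^{\pm1},E_i,F_i=E_i^*$, $1\le i\le\ell$, standard Drinfeld–Jimbo relations $K_iE_iK_i^{-1}=qE_i$, $K_iE_jK_i^{-1}=q^{-1/2}E_j$ for $|i-j|=1$, $=E_j$ for $|i-j|>1$, $[E_i,F_j]=\delta_{ij}\frac{K_i^2-K_i^{-2}}{q-q^{-1}}$, quantum Serre relations), enlarged by $\hat K=(K_1K_2^2\cdots K_\ell^\ell)^{2/(\ell+1)}$, set $[a,b]_q=ab-q^{-1}ba$, $M_{ii}=E_i$, $M_{jk}=[E_j,M_{j+1,k}]_q$ ($j<k$), $N_{i\ell}=(K_iK_{i+1}\cdots K_\ell)\hat K^{-1}$ and $X_i:=N_{i\ell}M_{i\ell}^*$. *)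

From HB Require Import structures.
From mathcomp Require Import all_boot all_order all_algebra.
Set Implicit Arguments. Unset Strict Implicit. Unset Printing Implicit Defensive.
Import Order.TTheory GRing.Theory Num.Theory.
Local Open Scope ring_scope.

Section UqDefs.
Variables (R : rcfType) (A : unitAlgType R).

Definition qcomm (q : R) (a b : A) : A := a * b - q^-1 *: (b * a).

(* Mup E q n j = M_{j, j+n}, built by  M_{jj} = E_j, M_{jk} = [E_j, M_{j+1,k}]_q *)
Fixpoint Mup (E : nat -> A) (q : R) (n j : nat) : A :=
  match n with
  | 0 => E j
  | n'.+1 => qcomm q (E j) (Mup E q n' j.+1)
  end.

Definition Mjk (E : nat -> A) (q : R) (j k : nat) : A := Mup E q (k - j) j.

Definition Nil (K : nat -> A) (Khat : A) (i l : nat) : A :=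
  (\prod_(i <= m < l.+1) K m) * Khat^-1.

Definition Xi (star : A -> A) (K E : nat -> A) (Khat : A) (q : R) (l i : nat) : A :=
  Nil K Khat i l * star (Mjk E q i l).

Definition Kcoef (q : R) (i j : nat) : R :=
  if i == j then q
  else if (i == j.+1) || (j == i.+1) then (Num.sqrt q)^-1
  else 1.

(* star is an involutive, R-linear, anti-multiplicative map
   (U_q over C, restricted to real scalars, is such an algebra) *)
Definition is_star (star : A -> A) : Prop :=
  [/\ forall a b, star (a + b) = star a + star b,
      forall (c : R) a, star (c *: a) = c *: star a,
      forall a b, star (a * b) = star b * star a,
      star 1 = 1 &
      forall a, star (star a) = a].

Definition Uq_su_relations (q : R) (l : nat) (star : A -> A)
    (K E : nat -> A) (Khat : A) : Prop :=
  let F := fun i => star (E i) in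
  [/\ is_star star,
   [/\
      forall i, (1 <= i <= l)%N -> K i \is a GRing.unit /\ star (K i) = K i,
      forall i j, (1 <= i <= l)%N -> (1 <= j <= l)%N -> K i * K j = K j * K i &
      (* K_i E_j K_i^{-1} = q^{a_ij/2} E_j *)
      forall i j, (1 <= i <= l)%N -> (1 <= j <= l)%N ->
        K i * E j * (K i)^-1 = Kcoef q i j *: E j],
   [/\
      forall i j, (1 <= i <= l)%N -> (1 <= j <= l)%N ->
        E i * F j - F j * E i =
          (if i == j then (q - q^-1)^-1 *: (K i ^+ 2 - (K i)^-1 ^+ 2) else 0),
      forall i j, (1 <= i <= l)%N -> (1 <= j <= l)%N ->
        ((i == j.+1) || (j == i.+1)) ->
        E i ^+ 2 * E j - (q + q^-1) *: (E i * E j * E i) + E j * E i ^+ 2 = 0 &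
      forall i j, (1 <= i <= l)%N -> (1 <= j <= l)%N ->
        (i != j) -> ~~ ((i == j.+1) || (j == i.+1)) -> E i * E j = E j * E i] &
      (* \hat K = (K_1 K_2^2 ... K_l^l)^{2/(l+1)}: invertible, self-adjoint,
         commuting with the K_i, (l+1)-th power equal to (K_1 K_2^2...K_l^l)^2,
         and hence \hat K E_j \hat K^{-1} = q^{delta_{jl}} E_j *)
      [/\ Khat \is a GRing.unit, star Khat = Khat,
          forall i, (1 <= i <= l)%N -> Khat * K i = K i * Khat,
          Khat ^+ l.+1 = (\prod_(1 <= m < l.+1) K m ^+ m) ^+ 2 &
          forall j, (1 <= j <= l)%N ->
            Khat * E j * Khat^-1 = (if j == l then q else 1) *: E j]].

End UqDefs.

From Pilot Require Import Defs.
From HB Require Import structures.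
From mathcomp Require Import all_boot all_order all_algebra.
From mathcomp Require Import zify.
Set Implicit Arguments. Unset Strict Implicit. Unset Printing Implicit Defensive.
Import Order.TTheory GRing.Theory Num.Theory.
Local Open Scope ring_scope.

(* X_i = N_i M_i^* where every N_i lies in the commutative algebra generated by
   the K_p and \hat K.  Each of these q-commutes with every E_k up to a scalar,
   hence with M_{j,l} = [E_j, M_{j+1,l}]_q up to the product of those scalars;
   since the Cartan matrix is symmetric, N_i M_j and N_j M_i pick up the same
   scalar c.  The quantum Serre relations propagate along the nested
   q-commutators and give M_i M_j = q M_j M_i for i < j.  Taking adjoints,
   X_i X_j = c N_i N_j M_i^* M_j^* while X_j X_i = c q N_i N_j M_i^* M_j^*. *)

Inductive ncscal :=
| NSq | NSqinv | NSnat of nat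
| NSadd of ncscal & ncscal | NSopp of ncscal | NSmul of ncscal & ncscal
| NSexp of ncscal & nat.

Inductive ncterm :=
| NTvar of nat | NTzero
| NTadd of ncterm & ncterm | NTopp of ncterm | NTmul of ncterm & ncterm
| NTscale of ncscal & ncterm | NTexp of ncterm & nat.

(* A monomial [(w, e, c)] stands for [(c * q ^ e) *: w]. *)
Definition ncmono := (seq nat * int * int)%type.

Definition ncmono_opp (m : ncmono) : ncmono := (m.1, - m.2).
Definition ncmono_mul (m1 m2 : ncmono) : ncmono :=
  (m1.1.1 ++ m2.1.1, m1.1.2 + m2.1.2, m1.2 * m2.2).

Definition ncpoly_mul (p1 p2 : seq ncmono) := [seq ncmono_mul m1 m2 | m1 <- p1, m2 <- p2].
Definition ncpoly_const (e c : int) : seq ncmono := [:: ([::], e, c)].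
Definition ncpoly_exp (p : seq ncmono) n := iter n (ncpoly_mul p) (ncpoly_const 0 1).

Fixpoint ncscal_norm (s : ncscal) : seq ncmono :=
  match s with
  | NSq => ncpoly_const 1 1
  | NSqinv => ncpoly_const (-1) 1
  | NSnat n => ncpoly_const 0 n
  | NSadd s1 s2 => ncscal_norm s1 ++ ncscal_norm s2
  | NSopp s1 => map ncmono_opp (ncscal_norm s1)
  | NSmul s1 s2 => ncpoly_mul (ncscal_norm s1) (ncscal_norm s2)
  | NSexp s1 n => ncpoly_exp (ncscal_norm s1) n
  end.

Fixpoint ncterm_norm (t : ncterm) : seq ncmono :=
  match t with
  | NTvar i => [:: ([:: i], 0, 1)]
  | NTzero => [::]
  | NTadd t1 t2 => ncterm_norm t1 ++ ncterm_norm t2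
  | NTopp t1 => map ncmono_opp (ncterm_norm t1)
  | NTmul t1 t2 => ncpoly_mul (ncterm_norm t1) (ncterm_norm t2)
  | NTscale s t1 => ncpoly_mul (ncscal_norm s) (ncterm_norm t1)
  | NTexp t1 n => ncpoly_exp (ncterm_norm t1) n
  end.

(* Words are normalised modulo the commutation of the letters [a] and [b]:
   every [b] is moved to the left of an [a] it follows. *)
Section WordNormal.
Variables a b : nat.

Fixpoint nc_insw (i : nat) (w : seq nat) : seq nat :=
  if w is j :: w' then
    if (i == a) && (j == b) then j :: nc_insw i w' else i :: w
  else [:: i].

Fixpoint nc_nfw (w : seq nat) : seq nat :=
  if w is i :: w' then nc_insw i (nc_nfw w') else [::].

Fixpoint nc_ins (m : ncmono) (p : seq ncmono) : seq ncmono :=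
  if p is m' :: p' then
    if m'.1 == m.1 then (m'.1, m'.2 + m.2) :: p' else m' :: nc_ins m p'
  else [:: m].

Definition nc_check (p : seq ncmono) : bool :=
  all (fun m : ncmono => m.2 == 0)
    (foldr nc_ins [::] [seq (nc_nfw m.1.1, m.1.2, m.2) | m <- p]).
End WordNormal.

Section NcSound.
Variables (R : fieldType) (A : algType R) (q : R) (vs : seq A).
Hypothesis q_neq0 : q != 0.

Fixpoint ncscal_eval (s : ncscal) : R :=
  match s with
  | NSq => q
  | NSqinv => q^-1
  | NSnat n => n%:R
  | NSadd s1 s2 => ncscal_eval s1 + ncscal_eval s2
  | NSopp s1 => - ncscal_eval s1
  | NSmul s1 s2 => ncscal_eval s1 * ncscal_eval s2
  | NSexp s1 n => ncscal_eval s1 ^+ n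
  end.

Fixpoint ncterm_eval (t : ncterm) : A :=
  match t with
  | NTvar i => vs`_i
  | NTzero => 0
  | NTadd t1 t2 => ncterm_eval t1 + ncterm_eval t2
  | NTopp t1 => - ncterm_eval t1
  | NTmul t1 t2 => ncterm_eval t1 * ncterm_eval t2
  | NTscale s t1 => ncscal_eval s *: ncterm_eval t1
  | NTexp t1 n => ncterm_eval t1 ^+ n
  end.

Definition ncword_eval (w : seq nat) : A := \prod_(i <- w) vs`_i.
Definition ncmono_eval (m : ncmono) : A := (m.2%:~R * q ^ m.1.2) *: ncword_eval m.1.1.
Definition ncpoly_eval (p : seq ncmono) : A := \sum_(m <- p) ncmono_eval m.

Lemma ncpoly_eval_cat p1 p2 : ncpoly_eval (p1 ++ p2) = ncpoly_eval p1 + ncpoly_eval p2.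
Proof. exact: big_cat. Qed.

Lemma ncpoly_eval_opp p : ncpoly_eval (map ncmono_opp p) = - ncpoly_eval p.
Proof.
rewrite /ncpoly_eval big_map -sumrN; apply: eq_bigr => m _.
by rewrite /ncmono_eval /= intrN mulNr scaleNr.
Qed.

Lemma ncmono_eval_mul m1 m2 :
  ncmono_eval (ncmono_mul m1 m2) = ncmono_eval m1 * ncmono_eval m2.
Proof.
rewrite /ncmono_eval /ncword_eval big_cat -scalerAl -scalerAr scalerA /=.
by rewrite intrM expfzDr // mulrACA.
Qed.

Lemma ncpoly_eval_mul p1 p2 :
  ncpoly_eval (ncpoly_mul p1 p2) = ncpoly_eval p1 * ncpoly_eval p2.
Proof.
rewrite /ncpoly_eval big_allpairs_dep mulr_suml; apply: eq_bigr => m1 _.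
by rewrite mulr_sumr; apply: eq_bigr => m2 _; rewrite ncmono_eval_mul.
Qed.

Lemma ncpoly_eval_const e c : ncpoly_eval (ncpoly_const e c) = (c%:~R * q ^ e) *: 1.
Proof. by rewrite /ncpoly_eval big_seq1 /ncmono_eval /ncword_eval big_nil. Qed.

Lemma ncpoly_eval_exp p n : ncpoly_eval (ncpoly_exp p n) = ncpoly_eval p ^+ n.
Proof.
elim: n => [|n IHn]; first by rewrite ncpoly_eval_const mul1r expr0z scale1r.
by rewrite /ncpoly_exp iterS ncpoly_eval_mul -/(ncpoly_exp p n) IHn exprS.
Qed.

Lemma ncscal_normE s : ncpoly_eval (ncscal_norm s) = ncscal_eval s *: 1.
Proof.
elim: s => [||n|s1 IH1 s2 IH2|s1 IH1|s1 IH1 s2 IH2|s1 IH1 n] /=.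
- by rewrite ncpoly_eval_const mul1r expr1z.
- by rewrite ncpoly_eval_const mul1r exprN1.
- by rewrite ncpoly_eval_const expr0z mulr1.
- by rewrite ncpoly_eval_cat IH1 IH2 scalerDl.
- by rewrite ncpoly_eval_opp IH1 scaleNr.
- by rewrite ncpoly_eval_mul IH1 IH2 -scalerAl mul1r scalerA.
- by rewrite ncpoly_eval_exp IH1 exprZn expr1n.
Qed.

Lemma ncterm_normE t : ncpoly_eval (ncterm_norm t) = ncterm_eval t.
Proof.
elim: t => [i||t1 IH1 t2 IH2|t1 IH1|t1 IH1 t2 IH2|s t1 IH1|t1 IH1 n] /=.
- by rewrite /ncpoly_eval big_seq1 /ncmono_eval /ncword_eval big_seq1 mul1r scale1r.
- exact: big_nil.
- by rewrite ncpoly_eval_cat IH1 IH2.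
- by rewrite ncpoly_eval_opp IH1.
- by rewrite ncpoly_eval_mul IH1 IH2.
- by rewrite ncpoly_eval_mul ncscal_normE IH1 -scalerAl mul1r.
- by rewrite ncpoly_eval_exp IH1.
Qed.

Section Commuting.
Variables a b : nat.
Hypothesis ab_comm : vs`_a * vs`_b = vs`_b * vs`_a.

Lemma ncword_eval_insw i w :
  ncword_eval (nc_insw a b i w) = vs`_i * ncword_eval w.
Proof.
elim: w => [|j w IHw] /=; first by rewrite /ncword_eval big_seq1 big_nil mulr1.
case: andP => [[/eqP ei /eqP ej]|_]; last by rewrite /ncword_eval big_cons.
by rewrite /ncword_eval !big_cons -/(ncword_eval _) IHw ei ej !mulrA ab_comm.
Qed.

Lemma ncword_eval_nfw w : ncword_eval (nc_nfw a b w) = ncword_eval w.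
Proof.
elim: w => [|i w IHw] //=.
by rewrite ncword_eval_insw IHw /ncword_eval big_cons.
Qed.

Lemma ncpoly_eval_ins m p : ncpoly_eval (nc_ins m p) = ncmono_eval m + ncpoly_eval p.
Proof.
elim: p => [|m' p IHp] /=; first by rewrite /ncpoly_eval big_seq1 big_nil addr0.
case: eqP => [em|_]; rewrite /ncpoly_eval !big_cons -/(ncpoly_eval _).
  by rewrite /ncmono_eval /= -em intrD mulrDl scalerDl addrAC addrC.
by rewrite IHp addrCA.
Qed.

Lemma nc_checkP p : nc_check a b p -> ncpoly_eval p = 0.
Proof.
move=> /allP p0.
have -> : ncpoly_eval p =
    ncpoly_eval (foldr nc_ins [::] [seq (nc_nfw a b m.1.1, m.1.2, m.2) | m <- p]).
  elim: p {p0} => [|m p IHp] /=; first by [].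
  rewrite ncpoly_eval_ins -IHp /ncpoly_eval big_cons.
  by rewrite /ncmono_eval /= ncword_eval_nfw.
rewrite /ncpoly_eval big1_seq // => m /andP[_ /p0 /eqP m0].
by rewrite /ncmono_eval m0 mul0r scale0r.
Qed.

Lemma nc_sound tl tr :
  nc_check a b (ncterm_norm (NTadd tl (NTopp tr))) -> ncterm_eval tl = ncterm_eval tr.
Proof.
move=> /nc_checkP; rewrite ncterm_normE /= => /eqP.
by rewrite subr_eq0 => /eqP.
Qed.
End Commuting.
End NcSound.

Ltac nc_index x vs :=
  lazymatch vs with
  | x :: _ => constr:(0%N)
  | _ :: ?vs' => let n := nc_index x vs' in constr:(n.+1)
  end.

Ltac nc_reify_scal q c :=
  lazymatch c with
  | q => constr:(NSq)
  | q^-1 => constr:(NSqinv)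
  | ?c1 + ?c2 =>
      let r1 := nc_reify_scal q c1 in let r2 := nc_reify_scal q c2 in
      constr:(NSadd r1 r2)
  | - ?c1 => let r1 := nc_reify_scal q c1 in constr:(NSopp r1)
  | ?c1 * ?c2 =>
      let r1 := nc_reify_scal q c1 in let r2 := nc_reify_scal q c2 in
      constr:(NSmul r1 r2)
  | ?c1 ^+ ?n => let r1 := nc_reify_scal q c1 in constr:(NSexp r1 n)
  | ?n%:R => constr:(NSnat n)
  | 1 => constr:(NSnat 1)
  | 0 => constr:(NSnat 0)
  end.

Ltac nc_reify q vs t :=
  lazymatch t with
  | 0 => constr:(NTzero)
  | ?t1 + ?t2 =>
      let r1 := nc_reify q vs t1 in let r2 := nc_reify q vs t2 in
      constr:(NTadd r1 r2)
  | - ?t1 => let r1 := nc_reify q vs t1 in constr:(NTopp r1)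
  | ?t1 * ?t2 =>
      let r1 := nc_reify q vs t1 in let r2 := nc_reify q vs t2 in
      constr:(NTmul r1 r2)
  | ?c *: ?t1 =>
      let s := nc_reify_scal q c in let r1 := nc_reify q vs t1 in
      constr:(NTscale s r1)
  | ?t1 ^+ ?n => let r1 := nc_reify q vs t1 in constr:(NTexp r1 n)
  | _ => let i := nc_index t vs in constr:(NTvar i)
  end.

(* [nc_ring_comm q hq vs x z xz] proves an equation between noncommutative
   polynomials in the atoms [vs] with coefficients in Z[q, q^-1], modulo the
   relation [xz : x * z = z * x]; [nc_ring q hq vs] uses no relation. *)
Ltac nc_ring_comm q hq vs x z xz :=
  lazymatch goal with
  | |- ?l = ?r =>
      let tl := nc_reify q vs l in let tr := nc_reify q vs r in
      let a := nc_index x vs in let b := nc_index z vs in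
      refine (@nc_sound _ _ q vs hq a b xz tl tr _); vm_compute; reflexivity
  end.

Ltac nc_ring q hq vs :=
  lazymatch vs with ?x :: _ => nc_ring_comm q hq vs x x (erefl (x * x)) end.

Section ScaledCommutation.
Variables (R : rcfType) (A : unitAlgType R).

Definition scomm (c : R) (x y : A) := x * y = c *: (y * x).

Lemma scommMl c1 c2 x1 x2 y :
  scomm c1 x1 y -> scomm c2 x2 y -> scomm (c1 * c2) (x1 * x2) y.
Proof.
rewrite /scomm => h1 h2.
by rewrite -mulrA h2 -scalerAr (mulrA x1) h1 -scalerAl scalerA -mulrA mulrC.
Qed.

Lemma scomm_prodl (I : eqType) (r : seq I) (c : I -> R) (x : I -> A) y :
  (forall i, i \in r -> scomm (c i) (x i) y) ->
  scomm (\prod_(i <- r) c i) (\prod_(i <- r) x i) y.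
Proof.
elim: r => [_|i r IHr cx]; first by rewrite /scomm !big_nil mulr1 mul1r scale1r.
rewrite !big_cons; apply: scommMl; first by apply: cx; rewrite mem_head.
by apply: IHr => k kr; apply: cx; rewrite inE kr orbT.
Qed.

Lemma scommVl (c : R) (x y : A) :
  x \is a GRing.unit -> c != 0 -> scomm c x y -> scomm c^-1 x^-1 y.
Proof.
rewrite /scomm => xU c0 xy.
have yxV : y * x^-1 = c *: (x^-1 * y).
  by rewrite -{1}(mulKr xU y) xy -scalerAr -scalerAl mulrA mulrK.
by rewrite yxV scalerA mulVf // scale1r.
Qed.

Lemma scomm_qcomm q c1 c2 x y z :
  scomm c1 x y -> scomm c2 x z -> scomm (c1 * c2) x (qcomm q y z).
Proof.
rewrite /scomm /qcomm => xy xz.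
have xyz : x * (y * z) = (c1 * c2) *: (y * z * x).
  by rewrite mulrA xy -scalerAl -(mulrA y x) xz -scalerAr scalerA mulrA.
have xzy : x * (z * y) = (c1 * c2) *: (z * y * x).
  by rewrite mulrA xz -scalerAl -(mulrA z x) xy -scalerAr scalerA mulrA mulrC.
by rewrite mulrBr -scalerAr xyz xzy mulrBl -scalerAl scalerBr !scalerA [q^-1 * _]mulrC.
Qed.

Lemma scomm_Mup q c x (E : nat -> A) n m :
  (forall k, (m <= k <= m + n)%N -> scomm (c k) x (E k)) ->
  scomm (\prod_(m <= k < (m + n).+1) c k) x (Mup E q n m).
Proof.
elim: n m => [|n IHn] m xE /=.
  by rewrite addn0 big_nat1; apply: xE; rewrite addn0 leqnn.
rewrite big_ltn ?ltnS ?leq_addr // -addSnnS; apply: scomm_qcomm.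
  by apply: xE; rewrite leqnn leq_addr.
by apply: IHn => k /andP[mk kn]; apply: xE; rewrite ltnW //=; lia.
Qed.

Lemma scomm_Mjk q c x (E : nat -> A) j l :
  (j <= l)%N -> (forall k, (j <= k <= l)%N -> scomm (c k) x (E k)) ->
  scomm (\prod_(j <= k < l.+1) c k) x (Mjk E q j l).
Proof.
move=> jl xE; rewrite /Mjk -{1}(subnKC jl); apply: scomm_Mup.
by rewrite subnKC.
Qed.

Lemma scomm_star (star : A -> A) c x y :
  is_star star -> scomm c x y -> scomm c (star y) (star x).
Proof. by case=> _ starZ starM _ _ xy; rewrite /scomm -!starM xy starZ. Qed.

Lemma scomm_mul_mul a b c d (k g : R) : g != 0 -> GRing.comm a c ->
  scomm k b c -> scomm k d a -> scomm g d b -> scomm g^-1 (a * b) (c * d).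
Proof.
rewrite /scomm => g0 ac bc da db.
rewrite mulrA -(mulrA a b c) bc -scalerAr -scalerAl.
rewrite -(mulrA c d) (mulrA d a) da -scalerAl -scalerAr -(mulrA a d b) db.
by rewrite -!scalerAr !scalerA [k * g]mulrC mulKf // !mulrA -ac.
Qed.
End ScaledCommutation.

Section Star.
Variables (R : rcfType) (A : unitAlgType R) (star : A -> A).
Hypothesis star_ok : is_star star.

Lemma star_invr x : x \is a GRing.unit -> star x = x -> star x^-1 = x^-1.
Proof.
case: star_ok => _ _ starM star1 _ xU xx.
have := congr1 star (mulVr xU); rewrite starM star1 xx => xVx.
by rewrite -[LHS](mulKr xU) xVx mulr1.
Qed.

Lemma star_prod (I : eqType) (r : seq I) (F : I -> A) :
  (forall i, i \in r -> star (F i) = F i) ->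
  {in r &, forall i j, GRing.comm (F i) (F j)} ->
  star (\prod_(i <- r) F i) = \prod_(i <- r) F i.
Proof.
case: star_ok => _ _ starM star1 _.
elim: r => [|i r IHr] Fs Fc; first by rewrite big_nil star1.
have Fir : GRing.comm (F i) (\prod_(j <- r) F j).
  rewrite big_seq; apply: commr_prod => j jr.
  by apply: Fc; rewrite inE ?eqxx ?jr ?orbT.
rewrite big_cons starM Fs ?mem_head // IHr -?Fir // => [j jr|j k jr kr].
  by apply: Fs; rewrite inE jr orbT.
by apply: Fc; rewrite inE ?jr ?kr orbT.
Qed.
End Star.

Section QSerre.
Variables (R : rcfType) (A : unitAlgType R) (q : R).
Hypothesis q_neq0 : q != 0.

Definition serre (a b : A) : A :=
  a ^+ 2 * b - (q + q^-1) *: (a * b * a) + b * a ^+ 2.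

Lemma serre_qcommE (a b : A) : qcomm q b a * a - q *: (a * qcomm q b a) = serre a b.
Proof. rewrite /qcomm /serre; nc_ring q q_neq0 [:: a; b]. Qed.

Lemma serre_scomm (a b : A) : serre a b = 0 -> scomm q (qcomm q b a) a.
Proof. by move=> ab0; apply/eqP; rewrite -subr_eq0 serre_qcommE ab0. Qed.

(* The coefficients were found by linear algebra in the free algebra modulo
   [x z = z x], where they are unique. *)
Lemma serre_qcomm_certificate (x y z : A) : GRing.comm x z ->
  (1 + q ^+ 2) *: serre (qcomm q y z) x =
      q *: (serre y x * z * z) - (q + q^-1) *: (z * serre y x * z)
    + q^-1 *: (z * z * serre y x)
    + (q^-1 ^+ 2 + 1) *: (serre z y * x * y) + (1 + q ^+ 2) *: (y * x * serre z y)
    - q^-1 *: (x * serre z y * y + serre z y * y * x)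
    - q *: (x * y * serre z y + y * serre z y * x).
Proof. move=> xz; rewrite /qcomm /serre; nc_ring_comm q q_neq0 [:: x; y; z] x z xz. Qed.

Lemma serre_qcomm (x y z : A) : GRing.comm x z ->
  serre y x = 0 -> serre z y = 0 -> serre (qcomm q y z) x = 0.
Proof.
move=> xz yx zy; have /eqP := serre_qcomm_certificate y xz.
rewrite yx zy !(mulr0, mul0r, scaler0, addr0, subr0) scaler_eq0 => /orP[|/eqP //].
by rewrite paddr_eq0 ?ler01 ?sqr_ge0 // oner_eq0.
Qed.

Lemma qcomm_scomm (x y z : A) : GRing.comm x z -> scomm q y z -> scomm q (qcomm q x y) z.
Proof.
rewrite /scomm => xz yz; apply/eqP; rewrite -subr_eq0.
have -> : qcomm q x y * z - q *: (z * qcomm q x y) =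
    x * (y * z - q *: (z * y)) - q^-1 *: ((y * z - q *: (z * y)) * x).
  rewrite /qcomm; nc_ring_comm q q_neq0 [:: x; y; z] x z xz.
by rewrite yz subrr mulr0 mul0r scaler0 subrr.
Qed.
End QSerre.

Lemma Kcoef_sym (R : rcfType) (q : R) p k : Kcoef q p k = Kcoef q k p.
Proof. by rewrite /Kcoef [p == k]eq_sym orbC. Qed.

Definition Kweight (R : rcfType) (q : R) (l i j : nat) : R :=
  \prod_(i <= p < l.+1) \prod_(j <= k < l.+1) Kcoef q p k.

Lemma Kweight_sym (R : rcfType) (q : R) l i j : Kweight q l i j = Kweight q l j i.
Proof.
rewrite /Kweight exchange_big; apply: eq_bigr => k _; apply: eq_bigr => p _.
exact: Kcoef_sym.
Qed.

Section Uq.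
Variables (R : rcfType) (A : unitAlgType R) (q : R) (l : nat)
  (star : A -> A) (K E : nat -> A) (Khat : A).
Hypotheses (q_gt0 : 0 < q) (rel : Uq_su_relations q l star K E Khat).

Local Notation M j := (Mjk E q j l).
Local Notation N i := (Defs.Nil K Khat i l).

Let q_neq0 : q != 0. Proof. by rewrite gt_eqF. Qed.
Let star_ok : is_star star. Proof. by case: rel. Qed.
Let K_unit p : (1 <= p <= l)%N -> K p \is a GRing.unit.
Proof. by case: rel => _ [KU _ _] _ _ /KU []. Qed.
Let K_star p : (1 <= p <= l)%N -> star (K p) = K p.
Proof. by case: rel => _ [KU _ _] _ _ /KU []. Qed.
Let K_comm p p' : (1 <= p <= l)%N -> (1 <= p' <= l)%N -> GRing.comm (K p) (K p').
Proof. by case: rel => _ [_ KK _] _ _; apply: KK. Qed.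
Let K_conj p k : (1 <= p <= l)%N -> (1 <= k <= l)%N ->
  K p * E k * (K p)^-1 = Kcoef q p k *: E k.
Proof. by case: rel => _ [_ _ KE] _ _; apply: KE. Qed.
Let E_serre k k' : (1 <= k <= l)%N -> (1 <= k' <= l)%N ->
  (k == k'.+1) || (k' == k.+1) -> serre q (E k) (E k') = 0.
Proof. by case: rel => _ _ [_ ES _] _; apply: ES. Qed.
Let E_comm k k' : (1 <= k <= l)%N -> (1 <= k' <= l)%N ->
  k != k' -> ~~ ((k == k'.+1) || (k' == k.+1)) -> GRing.comm (E k) (E k').
Proof. by case: rel => _ _ [_ _ EE] _; apply: EE. Qed.
Let Khat_unit : Khat \is a GRing.unit. Proof. by case: rel => _ _ _ []. Qed.
Let Khat_star : star Khat = Khat. Proof. by case: rel => _ _ _ []. Qed.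
Let Khat_comm p : (1 <= p <= l)%N -> GRing.comm Khat (K p).
Proof. by case: rel => _ _ _ [_ _ KhK _ _]; apply: KhK. Qed.
Let Khat_conj k : (1 <= k <= l)%N ->
  Khat * E k * Khat^-1 = (if k == l then q else 1) *: E k.
Proof. by case: rel => _ _ _ [_ _ _ _ KhE]; apply: KhE. Qed.

Lemma K_scomm_E p k : (1 <= p <= l)%N -> (1 <= k <= l)%N ->
  scomm (Kcoef q p k) (K p) (E k).
Proof.
by move=> hp hk; rewrite /scomm -[K p * E k](mulrVK (K_unit hp)) K_conj // -scalerAl.
Qed.

Lemma Khat_scomm_M j : (1 <= j <= l)%N -> scomm q Khat (M j).
Proof.
case/andP=> j1 jl.
have := scomm_Mjk q (c := fun k => if k == l then q else 1) (x := Khat) (E := E) jl.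
rewrite big_nat_recr //= eqxx big_nat_cond big1 ?mul1r; last first.
  by move=> k /andP[/andP[_ /ltn_eqF ->] _].
apply=> k /andP[jk kl].
by rewrite /scomm -[Khat * E k](mulrVK Khat_unit) Khat_conj -?scalerAl //; lia.
Qed.

Lemma N_scomm_M i j : (1 <= i)%N -> (1 <= j <= l)%N ->
  scomm (Kweight q l i j * q^-1) (N i) (M j).
Proof.
move=> i1 /andP[j1 jl]; apply: scommMl; last first.
  by apply: scommVl => //; apply: Khat_scomm_M; rewrite j1.
apply: scomm_prodl => p; rewrite mem_index_iota => /andP[ip pl].
apply: scomm_Mjk => // k /andP[jk kl].
by apply: K_scomm_E; lia.
Qed.

Lemma Khat_comm_N i : (1 <= i)%N -> GRing.comm Khat (N i).
Proof.
move=> i1; apply: commrM; last exact/commrV/commr_refl.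
rewrite big_seq; apply: commr_prod => p; rewrite mem_index_iota => hp.
by apply: Khat_comm; lia.
Qed.

Lemma K_comm_N p i : (1 <= p <= l)%N -> (1 <= i)%N -> GRing.comm (K p) (N i).
Proof.
move=> hp i1; apply: commrM; last exact/commrV/commr_sym/Khat_comm.
rewrite big_seq; apply: commr_prod => p'; rewrite mem_index_iota => hp'.
by apply: K_comm; lia.
Qed.

Lemma N_comm i j : (1 <= i)%N -> (1 <= j)%N -> GRing.comm (N i) (N j).
Proof.
move=> i1 j1; apply/commr_sym; rewrite {2}/Defs.Nil; apply: commrM.
  rewrite big_seq; apply: commr_prod => p; rewrite mem_index_iota => hp.
  by apply/commr_sym/K_comm_N; lia.
exact/commrV/commr_sym/Khat_comm_N.
Qed.

Lemma N_star i : (1 <= i)%N -> star (N i) = N i.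
Proof.
move=> i1; case: (star_ok) => _ _ starM _ _.
rewrite /Defs.Nil starM star_invr // (star_prod star_ok) => [|p|p p'].
- apply/commr_sym/commrV/commr_sym; rewrite big_seq; apply: commr_prod => p.
  by rewrite mem_index_iota => hp; apply: Khat_comm; lia.
- by rewrite mem_index_iota => hp; apply: K_star; lia.
- by rewrite !mem_index_iota => hp hp'; apply: K_comm; lia.
Qed.

Lemma star_M_scomm_N c i j : (1 <= i)%N ->
  scomm c (N i) (M j) -> scomm c (star (M j)) (N i).
Proof. by move=> i1 /(scomm_star star_ok); rewrite N_star. Qed.

Lemma E_comm_M k j : (1 <= k)%N -> (k.+2 <= j <= l)%N -> GRing.comm (E k) (M j).
Proof.
move=> k1 /andP[kj jl].
have := scomm_Mjk q (c := fun=> 1) (x := E k) (E := E) jl.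
rewrite big1_eq /scomm scale1r; apply=> k' /andP[jk' k'l].
by rewrite scale1r; apply: E_comm; lia.
Qed.

Lemma Mjk_step j : (j < l)%N -> M j = qcomm q (E j) (M j.+1).
Proof. by move=> jl; rewrite /Mjk -(subnSK jl). Qed.

Lemma serre_M n k : (1 <= k)%N -> (k + n.+1 = l)%N -> serre q (M k.+1) (E k) = 0.
Proof.
elim: n k => [|n IHn] k k1 kl.
  rewrite -kl addn1 /Mjk subnn; apply: E_serre; rewrite ?eqxx //; lia.
rewrite Mjk_step; last by lia.
apply: serre_qcomm => //.
- by apply: E_comm_M; lia.
- by apply: E_serre; rewrite ?eqxx //; lia.
- by apply: IHn; lia.
Qed.

Lemma M_scomm_M i j : (1 <= i)%N -> (i < j <= l)%N -> scomm q (M i) (M j).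
Proof.
move=> i1 /andP[ij jl]; have [d ji] : exists d, j = (i.+1 + d)%N.
  by exists (j - i.+1)%N; lia.
elim: d i i1 ij ji => [|d IHd] i i1 ij ji.
  rewrite ji addn0 Mjk_step; last by lia.
  by apply: serre_scomm => //; apply: (@serre_M (l - i.+1)); lia.
rewrite Mjk_step; last by lia.
apply: qcomm_scomm => //; first by apply: E_comm_M; lia.
by apply: IHd; lia.
Qed.
End Uq.

Theorem lemma3p14 (R : rcfType) (A : unitAlgType R) (q : R) (l : nat)
    (star : A -> A) (K E : nat -> A) (Khat : A) :
  0 < q -> q < 1 -> (1 <= l)%N ->
  Uq_su_relations q l star K E Khat ->
  forall i j : nat, (1 <= i)%N -> (i < j)%N -> (j <= l)%N ->
    Xi star K E Khat q l i * Xi star K E Khat q l j =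
      q^-1 *: (Xi star K E Khat q l j * Xi star K E Khat q l i).
Proof.
move=> q_gt0 _ _ rel i j i1 ij jl; have [star_ok _ _ _] := rel.
apply: (scomm_mul_mul (k := Kweight q l i j * q^-1)).
- by rewrite gt_eqF.
- by apply: (N_comm q_gt0 rel); lia.
- rewrite Kweight_sym; apply: (star_M_scomm_N q_gt0 rel); first lia.
  by apply: (N_scomm_M q_gt0 rel); lia.
- apply: (star_M_scomm_N q_gt0 rel) => //.
  by apply: (N_scomm_M q_gt0 rel); lia.
- by apply: scomm_star => //; apply: (M_scomm_M q_gt0 rel); lia.
Qed.
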